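(* A tree $T$ has no full star-cutset if and only if $T$ is a path on at most $4$ vertices. A chandelier has no full star-cutset if and only if it is a luxury chandelier.
   Context: A full star-cutset of a connected graph $G$ is a set $N[u]=\{u\}\cup N(u)$ whose removal disconnects $G$ ($u$ is its center). A chandelier is a graph obtained from a tree $T$ by adding a new vertex adjacent to every leaf of $T$; it is a luxury chandelier if in $T$ the neighbor of each leaf has degree two. *)

(* finite simple graphs as symmetric irreflexive relations. *)
From mathcomp Require Import all_boot.
Set Implicit Arguments. Unset Strict Implicit. Unset Printing Implicit Defensive.

Section Graphs.
Variable V : finType.
Implicit Types (e : rel V) (A : {set V}).

Definition restrict e A : rel V := fun x y => [&& x \in A, y \in A & e x y].

Definition conn_in e A : Prop :=
  forall x y, x \in A -> y \in A -> connect (restrict e A) x y.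

Definition acyclic_in e A : Prop :=
  forall s : seq V, all (mem A) s -> uniq s -> 3 <= size s -> ~~ cycle e s.

Definition tree_in e A : Prop := A != set0 /\ conn_in e A /\ acyclic_in e A.

Definition deg_in e A (x : V) : nat := #|[set y in A | e x y]|.

Definition leaf_in e A (x : V) : bool := (x \in A) && (deg_in e A x == 1).

Definition cnbhd e (u : V) : {set V} := [set v | (v == u) || e u v].

Definition has_full_star_cutset e : Prop :=
  exists u x y, [/\ x \notin cnbhd e u, y \notin cnbhd e u &
     ~~ connect (restrict e (~: cnbhd e u)) x y].

Definition is_path_le4 e : Prop :=
  exists n, exists f : 'I_n -> V, [/\ n <= 4, bijective f &
     forall i j : 'I_n, e (f i) (f j) = ((i.+1 == j) || (j.+1 == i))%N].

Definition chandelier e (c : V) : Prop :=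
  [/\ tree_in e (~: [set c]), 3 <= #|~: [set c]|, ~~ e c c &
      forall v, v != c -> e c v = leaf_in e (~: [set c]) v].

Definition luxury_chandelier e (c : V) : Prop :=
  chandelier e c /\
  forall l w, leaf_in e (~: [set c]) l -> w \in ~: [set c] -> e l w ->
     deg_in e (~: [set c]) w = 2.

End Graphs.

(* In a forest, a vertex w with three neighbours a, b, d gives the full
   star-cutset N[a], which separates b from d (they only meet through w); the
   middle vertex of a path on five vertices likewise separates its two ends.
   So a tree without full star-cutset has maximum degree two and no path on
   five vertices: it is a path on at most four vertices, and conversely in such
   a path any two vertices outside some N[u] coincide or are adjacent.
   In a chandelier with extra vertex c over the tree T: G - N[c] is T minus its
   leaves, which is connected; for an inner vertex u of T, every vertex outside
   N[u] walks away from u to a leaf of T and thus reaches c; for a leaf l with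
   neighbour w, G - N[l] is T - {l, w}, connected when w has degree two, while
   if w has degree at least three N[l] separates two other neighbours of w. *)

From mathcomp Require Import all_boot zify.
Set Implicit Arguments.
Unset Strict Implicit.
Unset Printing Implicit Defensive.

Lemma longest_seq (T : finType) (P : pred (seq T)) :
  {in P, forall s, uniq s} -> (exists s, P s) ->
  exists2 s, P s & forall s', P s' -> size s' <= size s.
Proof.
move=> Puniq [s0 Ps0].
have exN : exists n, [exists t : n.-tuple T, P t].
  by exists (size s0); apply/existsP; exists (in_tuple s0).
have boundN n : [exists t : n.-tuple T, P t] -> n <= #|T|.
  case/existsP=> t Pt; rewrite -(size_tuple t) -(card_uniqP (Puniq _ Pt)).
  exact: max_card.
have [n /existsP[t Pt] maxn] := ex_maxnP exN boundN.
exists (val t) => // s Ps; rewrite size_tuple; apply: maxn.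
by apply/existsP; exists (in_tuple s).
Qed.

Lemma connect_cross (T : finType) (r : rel T) (S : {pred T}) x y :
  connect r x y -> x \notin S -> y \in S ->
  exists x' y', [/\ x' \notin S, y' \in S & r x' y'].
Proof.
case/connectP=> p + ->; elim: p x => [|z p IHp] x /=; first by move=> _ /negP.
case/andP=> rxz pz xS; case: (boolP (z \in S)) => zS; first by exists x, z.
exact: IHp.
Qed.

Lemma connect_uniq (T : finType) (r : rel T) x y : connect r x y ->
  exists2 p, path r x p & uniq (x :: p) /\ last x p = y.
Proof. by case/connectP=> p /shortenP[p' pth' up' _] ->; exists p'. Qed.

Section Graph.
Variables (V : finType) (e : rel V).
Hypotheses (sym_e : symmetric e) (irr_e : irreflexive e).
Implicit Types (A R : {set V}) (s p : seq V).

Lemma connect_restrict_sub A R x y : A \subset R ->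
  connect (restrict e A) x y -> connect (restrict e R) x y.
Proof.
move=> /subsetP sAR; apply: connect_sub => u v /and3P[uA vA euv].
by apply: connect1; rewrite /restrict !sAR.
Qed.

Lemma restrict_pathE A x p : x \in A ->
  path (restrict e A) x p = path e x p && all (mem A) p.
Proof.
elim: p x => //= y p IHp x xA; rewrite /restrict xA /=.
case yA: (y \in A); rewrite /= ?andbF //.
by rewrite IHp // andbA.
Qed.

Lemma restrict_sym A : symmetric (restrict e A).
Proof. by move=> x y; rewrite /restrict sym_e andbCA. Qed.

Definition simple_path A s := [&& sorted e s, uniq s & all (mem A) s].

Lemma simple_path_edgeE A s x0 i j : acyclic_in e A -> simple_path A s ->
  i < size s -> j < size s ->
  e (nth x0 s i) (nth x0 s j) = (i.+1 == j) || (j.+1 == i).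
Proof.
move=> acA /and3P[sorted_s uniq_s sA] ilt jlt.
wlog le_ij : i j ilt jlt / i <= j.
  by move=> wlog_ij; case: (leqP i j) => [|/ltnW] ?; [|rewrite sym_e orbC];
    apply: wlog_ij.
case: ltngtP le_ij => // [lt_ij _|<-]; last by rewrite irr_e eqn_leq ltnn.
have -> : (j.+1 == i) = false by apply/eqP; lia.
rewrite orbF.
case: (eqVneq i.+1 j) => [ij|ne_ij].
  by move/(sortedP x0): sorted_s => /(_ i); rewrite ij; apply.
(* The chord closes the segment of s from index i to index j into a cycle. *)
apply/negP=> eij; pose t := drop i (take j.+1 s).
have size_t : size t = j.+1 - i by rewrite size_drop size_takel.
have t_def : t = nth x0 s i :: drop i.+1 (take j.+1 s).
  by rewrite /t (drop_nth x0) ?nth_take ?size_takel // ltnW.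
have last_t : last (nth x0 s i) (drop i.+1 (take j.+1 s)) = nth x0 s j.
  rewrite -[last _ _]/(last x0 (_ :: _)) -t_def -nth_last size_t nth_drop.
  by rewrite nth_take; [congr (nth _ _ _)|]; lia.
have : ~~ cycle e t.
  apply: acA; rewrite ?drop_uniq ?take_uniq ?size_t //; last lia.
  by apply/allP=> z /mem_drop/mem_take/(allP sA).
rewrite t_def /= rcons_path last_t sym_e eij andbT.
by rewrite -[path _ _ _]/(sorted e (_ :: _)) -t_def drop_sorted ?take_sorted.
Qed.

Lemma adj_neq x y : e x y -> x != y.
Proof. by apply: contraTneq => ->; rewrite irr_e. Qed.

Lemma acyclic_nbrs_nonadj A w a b : acyclic_in e A ->
  w \in A -> a \in A -> b \in A -> e w a -> e w b -> a != b -> ~~ e a b.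
Proof.
move=> acA wA aA bA ewa ewb neq_ab.
have awb : simple_path A [:: a; w; b].
  rewrite /simple_path /= !inE negb_or aA wA bA sym_e ewa ewb neq_ab.
  by rewrite (adj_neq ewb) eq_sym (adj_neq ewa).
by rewrite (simple_path_edgeE (i := 0) (j := 2) a acA awb).
Qed.

Lemma acyclic_nbrs_disconnected A w a b : acyclic_in e A ->
  w \in A -> a \in A -> b \in A -> e w a -> e w b -> a != b ->
  ~~ connect (restrict e (A :\ w)) a b.
Proof.
move=> acA wA aA bA ewa ewb neq_ab; apply/negP=> /connect_uniq[p pth [up lp]].
have aAw : a \in A :\ w by rewrite !inE eq_sym (adj_neq ewa).
move: pth; rewrite restrict_pathE // => /andP[pth pAw].
have wap : simple_path A [:: w, a & p].
  rewrite /simple_path cons_uniq up [sorted _ _]/= ewa pth /= wA aA inE.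
  rewrite negb_or (adj_neq ewa) andbT /=; apply/andP; split.
    by apply/negP=> /(allP pAw); rewrite !inE eqxx.
  by apply/allP=> z /(allP pAw) /setD1P[].
have := simple_path_edgeE (i := 0) (j := (size p).+1) w acA wap isT.
rewrite /= -[size p]/((size (a :: p)).-1) nth_last /= lp ewb => /(_ (ltnSn _)).
by case: p lp {up pAw wap pth} => [/= ba|//]; rewrite ba eqxx in neq_ab.
Qed.

Lemma star_cutset_at_branch A w a b d : acyclic_in e A ->
  w \in A -> a \in A -> b \in A -> d \in A -> e w a -> e w b -> e w d ->
  a != b -> a != d -> b != d -> ~: cnbhd e a \subset A :\ w ->
  has_full_star_cutset e.
Proof.
move=> acA wA aA bA dA ewa ewb ewd neq_ab neq_ad neq_bd sub_a; exists a, b, d.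
have out_a z : z \in A -> e w z -> a != z -> z \notin cnbhd e a.
  by move=> zA ewz neq_az; rewrite inE negb_or eq_sym neq_az
    (acyclic_nbrs_nonadj acA wA aA zA).
split; [exact: out_a | exact: out_a |].
apply: contraNN (acyclic_nbrs_disconnected acA wA bA dA ewb ewd neq_bd).
exact: connect_restrict_sub.
Qed.

Lemma star_cutset_of_long_path s : acyclic_in e [set: V] ->
  simple_path [set: V] s -> 4 < size s -> has_full_star_cutset e.
Proof.
case: s => [|v0 [|v1 [|v2 [|v3 [|v4 s]]]]] // acT.
case/and3P=> /= /and5P[e01 e12 e23 e34 _] + _ _; rewrite !inE !negb_or.
case/and5P=> /and5P[_ n02 _ _ _] /and4P[n12 n13 _ _] /and3P[n23 n24 _] _ _.
have inT := in_setT.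
have e10 : e v1 v0 by rewrite sym_e.
have e21 : e v2 v1 by rewrite sym_e.
have e32 : e v3 v2 by rewrite sym_e.
have n20 : ~~ e v2 v0.
  by apply: (acyclic_nbrs_nonadj acT (inT _ v1) (inT _ v2) (inT _ v0) e12 e10);
    rewrite eq_sym.
have n24' :=
  acyclic_nbrs_nonadj acT (inT _ v3) (inT _ v2) (inT _ v4) e32 e34 n24.
exists v2, v0, v4; split; rewrite ?inE ?negb_or.
- by rewrite n20 andbT.
- by rewrite n24' andbT eq_sym.
apply: contraNN (acyclic_nbrs_disconnected acT (inT _ v2) (inT _ v1) (inT _ v3)
  e21 e23 n13).
move=> conn04; apply: (connect_trans (y := v0)).
  by apply: connect1; rewrite /restrict !inE n12 n02 e10.
apply: connect_trans (connect_restrict_sub _ conn04) _.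
  by apply/subsetP=> z; rewrite !inE negb_or andbT => /andP[].
apply: connect1; rewrite /restrict !inE (eq_sym v4) n24 (eq_sym v3) n23.
by rewrite sym_e.
Qed.

Lemma simple_path_rev A s : simple_path A (rev s) = simple_path A s.
Proof.
rewrite /simple_path rev_uniq all_rev rev_sorted; congr (_ && _).
by case: s => //= x p; apply: eq_path => y z; apply: sym_e.
Qed.

Lemma simple_path_extend A x p : simple_path A (x :: p) ->
  exists2 r, simple_path A (x :: p ++ r) &
    {in A, forall z, e (last x (p ++ r)) z -> z \in x :: p ++ r}.
Proof.
move=> sp; pose P s := prefix (x :: p) s && simple_path A s.
have [s /andP[/prefixP[r ->] spr] maxs] :
    exists2 s, P s & forall s', P s' -> size s' <= size s.
  apply: longest_seq; last by exists (x :: p); rewrite /P prefix_refl.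
  by move=> s; rewrite unfold_in => /andP[_ /and3P[]].
exists r => // z zA elz; apply/negPn/negP=> zn.
have : P (rcons (x :: p ++ r) z).
  rewrite /P -cats1 prefix_catl ?prefix_prefix // cats1.
  case/and3P: spr => pth un all_s.
  rewrite /simple_path rcons_uniq zn un all_rcons all_s [mem A z]zA /=.
  by rewrite rcons_path -[path _ _ _]/(sorted e (x :: p ++ r)) pth elz.
by move/maxs; rewrite size_rcons /= ltnn.
Qed.

Lemma simple_path_end_leaf A x p : acyclic_in e A -> simple_path A (x :: p) ->
  p != [::] -> {in A, forall z, e (last x p) z -> z \in x :: p} ->
  leaf_in e A (last x p).
Proof.
move=> acA sp p_nil lastmax; set s := x :: p; set n := size p.
have n_gt0 : 0 < n by rewrite lt0n size_eq0.
have lastE : last x p = nth x s n by rewrite -[n]/((size s).-1) nth_last.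
have edgeE i : i < size s -> e (last x p) (nth x s i) = (i.+1 == n).
  move=> lt_is; rewrite lastE (simple_path_edgeE x acA sp) //.
  by rewrite -[n.+1]/(size s) (gtn_eqF lt_is).
have sA : {subset s <= A} by case/and3P: sp => _ _ /allP.
rewrite /leaf_in sA ?mem_last // /deg_in.
have -> : [set y in A | e (last x p) y] = [set nth x s n.-1].
  apply/setP=> y; rewrite !inE; apply/andP/eqP=> [[yA ely]|->].
    have ys := lastmax y yA ely; move: ely.
    by rewrite -(nth_index x ys) edgeE ?index_mem // => /eqP <-.
  by rewrite sA ?mem_nth ?edgeE ?prednK //; apply: (leq_trans (leq_pred _)).
by rewrite cards1.
Qed.

Lemma deg_le2_of_no_cutset w : acyclic_in e [set: V] ->
  ~ has_full_star_cutset e -> deg_in e [set: V] w <= 2.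
Proof.
move=> acT nocut; rewrite leqNgt; apply/negP=> /card_gt2P[a [b [d []]]].
rewrite !inE /= => -[ewa ewb ewd] [neq_ab neq_bd neq_da]; apply: nocut.
have sub_a : ~: cnbhd e a \subset [set: V] :\ w.
  apply/subsetP=> z; rewrite !inE negb_or andbT => /andP[_].
  by apply: contraNneq => ->; rewrite sym_e.
have inT := in_setT; rewrite eq_sym in neq_da.
exact: (star_cutset_at_branch acT (inT _ w) (inT _ a) (inT _ b) (inT _ d)).
Qed.

Lemma simple_path_cover A x p : conn_in e A ->
  {in A, forall w, deg_in e A w <= 2} -> simple_path A (x :: p) ->
  {in A, forall z, e x z -> z \in x :: p} ->
  {in A, forall z, e (last x p) z -> z \in x :: p} ->
  {subset A <= x :: p}.
Proof.
move=> connA deg_le2 sp headmax lastmax v vA; apply/negPn/negP=> vn.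
case/and3P: (sp) => sorted_s uniq_s _.
have sA : {subset x :: p <= A} by case/and3P: sp => _ _ /allP.
have [z [y [zn ys /and3P[zA yA ezy]]]] :=
  connect_cross (connA v x vA (sA x (mem_head x p))) vn (mem_head x p).
have eyz : e y z by rewrite sym_e.
set k := index y (x :: p); have lt_k : k < (size p).+1 by rewrite index_mem.
have yk : nth x (x :: p) k = y by rewrite nth_index.
case: (posnP k) => [k0 | k_gt0].
  by rewrite -yk k0 in eyz; rewrite (headmax z zA eyz) in zn.
have [lt_kp | ge_kp] := ltnP k (size p); last first.
  have kp : k = size p by apply/anti_leq; rewrite -ltnS lt_k.
  rewrite kp -[size p]/((size (x :: p)).-1) nth_last in yk.
  by rewrite -yk in eyz; rewrite (lastmax z zA eyz) in zn.
have /(sortedP x) adj := sorted_s.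
have e_prev : e y (nth x (x :: p) k.-1).
  by rewrite sym_e -yk -{2}(prednK k_gt0) adj ?prednK.
have e_next : e y (nth x (x :: p) k.+1) by rewrite -yk adj.
have := deg_le2 y yA; rewrite leqNgt => /negP; apply; apply/card_gt2P.
have ka : k.-1 < size (x :: p) := leq_ltn_trans (leq_pred k) lt_k.
have kb : k.+1 < size (x :: p) by rewrite /= ltnS.
exists (nth x (x :: p) k.-1), (nth x (x :: p) k.+1), z.
rewrite !inE e_prev e_next eyz zA !sA ?mem_nth //; split=> //; split.
- by rewrite nth_uniq // neq_ltn (leq_ltn_trans (leq_pred k) (ltnSn k)).
- by apply: contraNneq zn => <-; rewrite mem_nth.
- by apply: contraNneq zn => ->; rewrite mem_nth.
Qed.

Lemma simple_path_is_path_le4 x p : acyclic_in e [set: V] ->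
  simple_path [set: V] (x :: p) -> (forall v, v \in x :: p) -> size p < 4 ->
  is_path_le4 e.
Proof.
move=> acT sp cover size_p; have /and3P[_ uniq_s _] := sp.
exists (size (x :: p)), (fun i : 'I_(size (x :: p)) => nth x (x :: p) i).
split=> // [|i j]; last by rewrite (simple_path_edgeE x acT sp).
apply: inj_card_bij => [i j /eqP|].
  by rewrite nth_uniq // => /eqP/val_inj.
rewrite card_ord -(card_uniqP uniq_s).
by apply/subset_leq_card/subsetP=> v _; apply: cover.
Qed.

Lemma tree_no_cutset_is_path : tree_in e [set: V] ->
  ~ has_full_star_cutset e -> is_path_le4 e.
Proof.
case=> /set0Pn[v _] [connT acT] nocut.
have sp_v : simple_path [set: V] [:: v] by rewrite /simple_path /= in_setT.
have [r1 sp1 max1] := simple_path_extend sp_v.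
set y := last v r1; rewrite /= -/y in sp1 max1.
(* Extending the reversed path again gives a path maximal at both ends. *)
have [r2 sp2 max2] :
    exists2 r2, simple_path [set: V] (y :: rev (belast v r1) ++ r2) &
    {in [set: V], forall z, e (last y (rev (belast v r1) ++ r2)) z ->
       z \in y :: rev (belast v r1) ++ r2}.
  by apply: simple_path_extend; rewrite -rev_rcons -lastI simple_path_rev.
have sub1 : {subset v :: r1 <= y :: rev (belast v r1) ++ r2}.
  move=> z; rewrite -mem_rev lastI rev_rcons -/y !inE mem_cat.
  by case/orP=> ->; rewrite ?orbT.
apply: (simple_path_is_path_le4 acT sp2) => [v'|].
  apply: (simple_path_cover connT _ sp2 _ max2 (in_setT v')) => [w _ | z _ eyz].
    exact: deg_le2_of_no_cutset.
  exact/sub1/max1.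
rewrite ltnNge; apply/negP=> long; apply: nocut.
by apply: star_cutset_of_long_path acT sp2 _.
Qed.

Lemma deg_le1_nbr_eq A w a b : deg_in e A w <= 1 ->
  a \in A -> b \in A -> e w a -> e w b -> a = b.
Proof.
by move/card_le1_eqP=> deg_w aA bA ewa ewb; apply: deg_w; rewrite inE ?aA ?bA.
Qed.

Lemma tree_pendants_nonadj A l w : conn_in e A -> 2 < #|A| ->
  l \in A -> w \in A -> deg_in e A l <= 1 -> deg_in e A w <= 1 -> ~~ e l w.
Proof.
move=> connA gt2 lA wA deg_l deg_w; apply/negP=> elw.
have /subsetPn[z zA zlw] : ~~ (A \subset [set l; w]).
  apply: contraTN gt2 => /subset_leq_card; rewrite cards2 -leqNgt.
  by case: (l != w) => /= ?; lia.
have lS : l \notin ~: [set l; w] by rewrite !inE eqxx.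
have zS : z \in ~: [set l; w] by rewrite inE.
have [a [b [alw blw /and3P[_ bA eab]]]] :=
  connect_cross (connA l z lA zA) lS zS.
have ewl : e w l by rewrite sym_e.
move: blw eab; rewrite !inE negb_or => /andP[bl bw].
move: alw; rewrite !inE negbK => /orP[] /eqP-> eab.
- by rewrite (deg_le1_nbr_eq deg_l bA wA eab elw) eqxx in bw.
- by rewrite (deg_le1_nbr_eq deg_w bA lA eab ewl) eqxx in bl.
Qed.

Lemma conn_in_remove_pendants A R : R \subset A ->
  {in A, forall v, v \notin R -> deg_in e A v <= 1} ->
  conn_in e A -> conn_in e R.
Proof.
move=> /subsetP sRA pendant connA x y xR yR.
have [p pth [up lp]] := connect_uniq (connA x y (sRA x xR) (sRA y yR)).
rewrite -lp in yR *; clear lp.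
elim: p x xR pth up yR => [|z p IHp] x xR; first by rewrite connect0.
move=> /= /andP[/and3P[xA zA exz] pth] /andP[xn up] lR.
have zR : z \in R.
  case: p pth xn up lR {IHp} => [//| z' p] /=.
  move=> /andP[/and3P[_ z'A ezz'] _] xn _ _.
  apply/negPn/(contra (pendant z zA)); rewrite -ltnNge.
  apply/card_gt1P; exists x, z'; rewrite !inE xA z'A ezz' sym_e exz.
  by move: xn; rewrite !inE negb_or => /andP[_ /norP[]].
apply: connect_trans (IHp z zR pth up lR).
by apply: connect1; rewrite /restrict xR zR.
Qed.

Lemma simple_path_head_nbr A u t z : acyclic_in e A -> simple_path A (u :: t) ->
  z \in t -> e u z -> z = head u t.
Proof.
move=> acA sp zt euz; have zs : z \in u :: t by rewrite inE zt orbT.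
have zi : index z (u :: t) < size (u :: t) by rewrite index_mem.
have := simple_path_edgeE u acA sp (ltn0Sn _) zi.
rewrite nth_index // [nth _ _ 0]/= euz => /esym/orP[/eqP k1|//].
by rewrite -(nth_index u zs) -k1 /= nth0.
Qed.

Lemma tree_escape_to_leaf A u v : acyclic_in e A -> conn_in e A ->
  u \in A -> v \in A -> v \notin cnbhd e u ->
  exists l, [/\ leaf_in e A l, l \notin cnbhd e u &
                 connect (restrict e (~: cnbhd e u)) v l].
Proof.
move=> acA connA uA vA vn.
have [p + [up lp]] := connect_uniq (connA u v uA vA).
rewrite restrict_pathE // => /andP[pth pA].
have [r spr maxr] : exists2 r, simple_path A (u :: p ++ r) &
    {in A, forall z, e (last u (p ++ r)) z -> z \in u :: p ++ r}.
  by apply: simple_path_extend; rewrite /simple_path up /= pth uA.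
have p_nil : p != [::] by apply: contraNneq vn => p0; rewrite -lp p0 inE eqxx.
have {}up : uniq (u :: p ++ r) by case/and3P: spr.
have out z : z \in v :: r -> z \notin cnbhd e u.
  have vp : v \in p.
    by rewrite -lp; case: (p) p_nil => // a q _; apply: (mem_last a q).
  move=> zvr; have zt : z \in p ++ r.
    by move: zvr; rewrite inE mem_cat => /orP[/eqP->|->]; rewrite ?vp ?orbT.
  rewrite inE negb_or; apply/andP; split.
    by apply: contraTneq zt => ->; move: up; rewrite cons_uniq => /andP[].
  apply/negP=> euz; have zh := simple_path_head_nbr acA spr zt euz.
  move: zvr; rewrite inE => /orP[/eqP zv | zr].
    by move: vn; rewrite -zv inE euz orbT.
  move: up; rewrite cons_uniq cat_uniq.
  move=> /andP[_ /and3P[_ /hasPn/(_ z zr) + _]].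
  by rewrite zh; case: (p) p_nil => // a q _; rewrite /= inE eqxx.
have {}pth : path e v r.
  by case/and3P: spr => /=; rewrite cat_path lp => /andP[].
exists (last v r); split.
- have pr_nil : p ++ r != [::] by case: (p) p_nil.
  by have := simple_path_end_leaf acA spr pr_nil maxr; rewrite last_cat lp.
- exact/out/mem_last.
apply/connectP; exists r => //.
rewrite restrict_pathE; last by rewrite in_setC out ?mem_head.
rewrite pth; apply/allP=> z zr.
by rewrite [mem _ _]in_setC out // inE zr orbT.
Qed.

Lemma no_cutset_of_conn_out : (forall u, conn_in e (~: cnbhd e u)) ->
  ~ has_full_star_cutset e.
Proof.
by move=> conn_out [u [x [y [xn yn /negP[]]]]]; apply: conn_out; rewrite inE.
Qed.

Section Chandelier.
Variable c : V.
Hypothesis ch : chandelier e c.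
Local Notation T := (~: [set c]).

Lemma chandelier_leafE v : v \in T -> e c v = leaf_in e T v.
Proof. by case: ch => _ _ _ ech; rewrite !inE; apply: ech. Qed.

Lemma chandelier_luxury_of_no_cutset :
  ~ has_full_star_cutset e -> luxury_chandelier e c.
Proof.
move=> nocut; split=> // l w leaf_l wT elw.
have [[_ [connT acT]] gt2 _ _] := ch.
have /andP[lT /eqP deg_l] := leaf_l.
case: (ltngtP (deg_in e T w) 2) => // [lt2 | gt2w].
  by rewrite (negbTE (tree_pendants_nonadj connT gt2 lT wT _ _)) ?deg_l in elw.
case: nocut; set S := [set y in T | e w y].
have lS : l \in S by rewrite inE lT sym_e.
have : 1 < #|S :\ l| by move: gt2w; rewrite /deg_in -/S (cardsD1 l S) lS.
case/card_gt1P=> a [b [aSl bSl neq_ab]].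
case/setD1P: aSl => neq_al /setIdP[aT ewa].
case/setD1P: bSl => neq_bl /setIdP[bT ewb].
have ewl : e w l by rewrite sym_e.
rewrite eq_sym in neq_al; rewrite eq_sym in neq_bl.
apply: (star_cutset_at_branch acT wT lT aT bT ewl ewa ewb neq_al neq_bl neq_ab).
apply/subsetP=> z; rewrite !inE negb_or => /andP[neq_zl nelz].
apply/andP; split; first by apply: contraNneq nelz => ->.
by apply: contraNneq nelz => ->; rewrite sym_e chandelier_leafE.
Qed.

Lemma chandelier_conn_out_center : conn_in e (~: cnbhd e c).
Proof.
have [[_ [connT _]] _ _ _] := ch.
have -> : ~: cnbhd e c = [set v in T | ~~ leaf_in e T v].
  apply/setP=> v; rewrite !inE negb_or; have [->|vc] := eqVneq v c => //=.
  by rewrite chandelier_leafE // !inE vc.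
apply: conn_in_remove_pendants connT.
  by apply/subsetP=> v; rewrite inE => /andP[].
by move=> v vT; rewrite inE vT negbK => /andP[_ /eqP->].
Qed.

Lemma luxury_conn_out_leaf u : luxury_chandelier e c -> leaf_in e T u ->
  conn_in e (~: cnbhd e u).
Proof.
case=> _ lux leaf_u; have [[_ [connT _]] _ _ _] := ch.
have /andP[uT /cards1P[w Nu]] := leaf_u.
have /setIdP[wT euw] : w \in [set y in T | e u y] by rewrite Nu set11.
have euc : e u c by rewrite sym_e chandelier_leafE.
have -> : ~: cnbhd e u = T :\ u :\ w.
  apply/setP=> v; rewrite !inE negb_or; have [->|vc] := eqVneq v c.
    by rewrite euc !andbF.
  have vT : v \in T by rewrite !inE vc.
  have -> : e u v = (v == w) by rewrite -in_set1 -Nu inE vT.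
  by rewrite andbT andbC.
have pendant_u : {in T, forall v, v \notin T :\ u -> deg_in e T v <= 1}.
  move=> v vT; rewrite in_setD1 vT andbT negbK => /eqP->.
  by case/andP: leaf_u => _ /eqP->.
have connTu := conn_in_remove_pendants (subD1set _ _) pendant_u connT.
apply: conn_in_remove_pendants connTu.
  exact: subD1set.
move=> v vTu; rewrite in_setD1 vTu andbT negbK => /eqP->.
set S := [set y in T | e w y]; have uS : u \in S by rewrite inE uT sym_e.
have : #|S| = 2 by exact: lux leaf_u wT euw.
rewrite (cardsD1 u S) uS => -[<-]; apply/subset_leq_card/subsetP=> y.
by rewrite !inE => /andP[/andP[-> ->] ->].
Qed.

Lemma chandelier_conn_out_inner u : u != c -> ~~ leaf_in e T u ->
  conn_in e (~: cnbhd e u).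
Proof.
move=> uc inner_u; have [[_ [connT acT]] _ _ _] := ch.
have uT : u \in T by rewrite !inE.
have cN : c \in ~: cnbhd e u.
  by rewrite !inE negb_or eq_sym uc sym_e chandelier_leafE.
have to_c v : v \in ~: cnbhd e u -> connect (restrict e (~: cnbhd e u)) v c.
  have [->|vc vN] := eqVneq v c; first by rewrite connect0.
  have vT : v \in T by rewrite !inE.
  have vN' : v \notin cnbhd e u by rewrite in_setC in vN.
  have [l [leaf_l lN conn_vl]] := tree_escape_to_leaf acT connT uT vT vN'.
  apply: connect_trans conn_vl (connect1 _).
  have lT : l \in T by case/andP: leaf_l.
  by rewrite /restrict inE lN cN sym_e chandelier_leafE.
move=> x y xN yN; apply: connect_trans (to_c x xN) _.
by rewrite (sym_connect_sym (restrict_sym _)) to_c.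
Qed.

Lemma luxury_chandelier_no_cutset : luxury_chandelier e c ->
  ~ has_full_star_cutset e.
Proof.
move=> lux; apply: no_cutset_of_conn_out => u.
have [->|uc] := eqVneq u c; first exact: chandelier_conn_out_center.
have [leaf_u|inner_u] := boolP (leaf_in e T u).
  exact: luxury_conn_out_leaf.
exact: chandelier_conn_out_inner.
Qed.
End Chandelier.
End Graph.

Lemma path_le4_no_cutset (V : finType) (e : rel V) :
  is_path_le4 e -> ~ has_full_star_cutset e.
Proof.
case=> n [f [le_n4 [g fK gK] ef]] [u [x [y [+ + /negP[]]]]].
rewrite -(gK u) -(gK x) -(gK y); move: (g u) (g x) (g y) => i j k.
have inN a b :
    (f b \in cnbhd e (f a)) = [|| b == a :> nat, a.+1 == b | b.+1 == a].
  by rewrite inE ef (inj_eq (can_inj fK)).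
rewrite !inN => jN kN.
have : [|| j == k :> nat, j.+1 == k | k.+1 == j].
  by move: (ltn_ord i) (ltn_ord j) (ltn_ord k) jN kN; lia.
case/or3P=> [/eqP/val_inj-> | adj | adj]; first exact: connect0.
all: apply: connect1; rewrite /restrict !in_setC !inN (negbTE jN) (negbTE kN).
all: by rewrite ef adj ?orbT.
Qed.

Theorem mainTheorem12 :
  (forall (V : finType) (e : rel V), symmetric e -> irreflexive e ->
     tree_in e [set: V] ->
     (~ has_full_star_cutset e <-> is_path_le4 e)) /\
  (forall (V : finType) (e : rel V) (c : V), symmetric e -> irreflexive e ->
     chandelier e c ->
     (~ has_full_star_cutset e <-> luxury_chandelier e c)).
Proof.
split=> [V e sym_e irr_e tree_e | V e c sym_e irr_e ch].
  split; [exact: tree_no_cutset_is_path | exact: path_le4_no_cutset].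
split; first exact: chandelier_luxury_of_no_cutset.
exact: luxury_chandelier_no_cutset.
Qed.
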